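(* Assume $V$ is an $(X^{\rm in},T,\varphi)$-compatible Opt-Lyapunov function for $(X^{\rm in},T)$ with $N'_T(V)>0$, and let $\alpha$ be an $(X^{\rm in},T,\varphi)$-certificate of compatibility for $V$, with $I$ the interval such that $\alpha(I)=[0,1]$ and $\alpha$ strictly increasing continuous on $\operatorname{conv}(I^\varphi\cup I)$. Let $J=\overline{\operatorname{conv}}(I^\varphi\cup I)$, $\overline V=\sup_{x\in X^{\rm in}}V(x)$, and $h(x)=(\alpha|_J)^{-1}(x\overline V)$ for $x\in[0,1]$ (extended arbitrarily to $\mathbb R$). Then $h$ is strictly increasing and continuous on $[0,1]$, $N'_T(V)\in(0,1)$, $\nu_k\le h\big((N'_T(V))^k\big)$ for all $k\in\mathbb N$, and $\{k\in\mathbb N:\nu_k>h(0)\}\neq\emptyset$.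
   Context: Standing data: nonempty $X^{\rm in}\subseteq\mathbb R^d$, $T:\mathbb R^d\to\mathbb R^d$, $\varphi:\mathbb R^d\to\mathbb R$ with $\varphi(0)=0$, $\nu_k=\sup_{x\in X^{\rm in}}\varphi(T^k(x))$ finite for all $k$; $G^{>}_\nu=\{k:\nu_k>\limsup_n\nu_n\}$. An Opt-Lyapunov function for $(X^{\rm in},T)$ is $V:\mathbb R^d\to[0,+\infty]$ with $\sup_{X^{\rm in}}V\in(0,1]$ and $V\circ T\le\lambda V$ for some $\lambda\in(0,1)$. $N'_T(V)=\sup\{V(T(x))/V(x):V(x)\in(0,+\infty)\}$. $I^\varphi=\overline{\operatorname{conv}}\{\varphi(T^k(x)):k\in\mathbb N,x\in X^{\rm in}\}$. $\mathrm{SC}$: functions $\alpha:\mathbb R\to\mathbb R$ with an interval $I$ such that $\alpha(I)=[0,1]$ and $\alpha$ strictly increasing continuous on $\operatorname{conv}(I^\varphi\cup I)$ (such $I$ is unique). A certificate of compatibility for $g$ is $\alpha\in\mathrm{SC}$ with $\alpha(\nu_k)>0$ for some $k\in G^{>}_\nu$ and $\alpha(\varphi(T^k(x)))\le g(T^k(x))$ for all $k,x\in X^{\rm in}$. $g$ is $(X^{\rm in},T,\varphi)$-compatible if for some $k\in G^{>}_\nu$ there are $\varepsilon,\eta>0$ with: $x\in X^{\rm in}$, $j\in\mathbb N$, $\varphi(T^j(x))>\nu_k-\eta$ imply $g(T^j(x))>\varepsilon$. *)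

From HB Require Import structures.
From mathcomp Require Import all_boot all_order all_algebra.
From mathcomp Require Import all_classical all_reals all_analysis.
Set Implicit Arguments. Unset Strict Implicit. Unset Printing Implicit Defensive.
Import Order.TTheory GRing.Theory Num.Theory.
Import numFieldNormedType.Exports.
Local Open Scope classical_set_scope.
Local Open Scope ring_scope.

Section Defs.
Context {R : realType} {d : nat}.
Implicit Types (Xin : set 'rV[R]_d) (T : 'rV[R]_d -> 'rV[R]_d)
  (phi : 'rV[R]_d -> R) (V : 'rV[R]_d -> \bar R).

Definition convexR (A : set R) : Prop :=
  forall x y (t : R), A x -> A y -> 0 <= t <= 1 -> A (t * x + (1 - t) * y).

Definition conv_hull (S : set R) : set R :=
  \bigcap_(C in [set C : set R | convexR C /\ S `<=` C]) C.

Definition cl_conv_hull (S : set R) : set R := closure (conv_hull S).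

Definition orbit_vals Xin T phi (k : nat) : set R :=
  [set phi (iter k T x) | x in Xin].

Definition nu Xin T phi (k : nat) : R := sup (orbit_vals Xin T phi k).

Definition Ggt Xin T phi : set nat :=
  [set k | (limn_esup (fun n => (nu Xin T phi n)%:E) < (nu Xin T phi k)%:E)%E].

Definition Vsup Xin V : \bar R := ereal_sup (V @` Xin).

Definition opt_lyapunov Xin T V : Prop :=
  (0 < Vsup Xin V)%E /\ (Vsup Xin V <= 1)%E /\
  exists lam : R, 0 < lam < 1 /\ forall x, (V (T x) <= lam%:E * V x)%E.

Definition Nprime T V : \bar R :=
  ereal_sup [set (V (T x) * ((fine (V x))^-1)%:E)%E
            | x in [set x | (0 < V x)%E /\ (V x < +oo)%E]].

Definition Iphi Xin T phi : set R :=
  cl_conv_hull [set phi (iter k T x) | k in [set: nat] & x in Xin].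

Definition SC_with Xin T phi (alpha : R -> R) (I : set R) : Prop :=
  is_interval I /\ alpha @` I = `[0, 1]%classic /\
  let K := conv_hull (Iphi Xin T phi `|` I) in
  {in K &, {homo alpha : x y / x < y}} /\ {within K, continuous alpha}.

Definition SC Xin T phi (alpha : R -> R) : Prop :=
  exists I, SC_with Xin T phi alpha I.

Definition certificate Xin T phi (alpha : R -> R) (g : 'rV[R]_d -> \bar R) : Prop :=
  SC Xin T phi alpha /\
  (exists2 k, Ggt Xin T phi k & 0 < alpha (nu Xin T phi k)) /\
  forall k x, Xin x -> ((alpha (phi (iter k T x)))%:E <= g (iter k T x))%E.

Definition compatible Xin T phi (g : 'rV[R]_d -> \bar R) : Prop :=
  exists2 k, Ggt Xin T phi k &
  exists eps eta : R, 0 < eps /\ 0 < eta /\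
    forall x j, Xin x -> nu Xin T phi k - eta < phi (iter j T x) ->
      (eps%:E < g (iter j T x))%E.

End Defs.

From HB Require Import structures.
From mathcomp Require Import all_boot all_order all_algebra.
From mathcomp Require Import all_classical all_reals all_analysis.
From mathcomp Require Import ring lra.
Set Implicit Arguments.
Unset Strict Implicit.
Unset Printing Implicit Defensive.
Import Order.TTheory GRing.Theory Num.Theory.
Import numFieldNormedType.Exports.
Local Open Scope classical_set_scope.
Local Open Scope ring_scope.

(* On the real line the convex hull of a closed set is closed, so
   K = conv (I^phi u I) is closed (I is the segment alpha^-1 [0, 1]) and h
   takes its values in K, where alpha is strictly increasing.  Since
   alpha (h x) = x Vbar, h is strictly increasing, and it is continuous
   because by convexity of K it maps [0, 1] onto the segment [h 0, h 1].
   Iterating V (T x) <= N'_T(V) V x gives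
   alpha (phi (T^k x)) <= V (T^k x) <= N'_T(V)^k Vbar = alpha (h (N'_T(V)^k)),
   and monotonicity of alpha turns this into nu_k <= h (N'_T(V)^k); finally
   alpha (nu_k) > 0 = alpha (h 0) for the certificate index k. *)

Section ConvexHull.
Context {R : realType}.
Implicit Types (S C : set R) (c e : R).

Lemma conv_hull_convex S : convexR (conv_hull S).
Proof.
move=> x y t Sx Sy t01 C [Cconv SC].
exact: Cconv (Sx C (conj Cconv SC)) (Sy C (conj Cconv SC)) t01.
Qed.

Lemma sub_conv_hull S : S `<=` conv_hull S.
Proof. by move=> x Sx C [_]; apply. Qed.

Lemma conv_hull_min S C : convexR C -> S `<=` C -> conv_hull S `<=` C.
Proof. by move=> Cconv SC x; apply. Qed.

Lemma convexR_between C u v z : convexR C -> C u -> C v -> u <= z <= v -> C z.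
Proof.
move=> Cconv Cu Cv /andP[uz zv]; have [<-//|uz'] := eqVneq u z.
have vu : 0 < v - u by rewrite subr_gt0 (lt_le_trans _ zv)// lt_neqAle uz' uz.
have -> : z = ((v - z) / (v - u)) * u + (1 - (v - z) / (v - u)) * v.
  by field; rewrite gt_eqF.
apply: Cconv => //; rewrite divr_ge0 ?subr_ge0 ?(le_trans uz) //= ler_pdivrMr // mul1r; lra.
Qed.

Lemma convexR_ge c : convexR [set x | c <= x].
Proof.
move=> x y t /= cx cy /andP[t0 t1]; have -> : c = t * c + (1 - t) * c by ring.
by rewrite lerD // ler_wpM2l // subr_ge0.
Qed.

Lemma convexR_le c : convexR [set x | x <= c].
Proof.
move=> x y t /= xc yc /andP[t0 t1]; have -> : c = t * c + (1 - t) * c by ring.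
by rewrite lerD // ler_wpM2l // subr_ge0.
Qed.

Lemma closed_gap S e : closed S -> ~ S e ->
  exists2 d, 0 < d & forall u, S u -> d <= `|e - u|.
Proof.
move=> /closed_openC Sco Se; have : nbhs e (~` S) by rewrite nbhsE; exists (~` S).
move=> /nbhs_ballP[d d0 ballS]; exists d => // u Su.
by rewrite leNgt; apply/negP => eud; apply: (ballS u) => //; rewrite -ball_normE.
Qed.

Lemma closure_near S e d : closure S e -> 0 < d -> exists2 u, S u & `|e - u| < d.
Proof.
move=> Se d0; have [u [Su eu]] := Se _ (nbhsx_ballx e d d0).
by exists u; rewrite // -ball_normE.
Qed.

Lemma closure_conv_hull_lb S e : closed S -> closure (conv_hull S) e ->
  exists2 u, S u & u <= e.
Proof.
move=> Scl Ke; apply: contrapT => noLB.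
have S_gt u : S u -> e < u by move=> Su; rewrite ltNge; apply/negP => ue; apply: noLB; exists u.
have [d d0 gapS] : exists2 d, 0 < d & forall u, S u -> d <= `|e - u|.
  by apply: closed_gap Scl _ => /S_gt; rewrite ltxx.
have KS : conv_hull S `<=` [set x | e + d <= x].
  apply: conv_hull_min; first exact: convexR_ge.
  by move=> u Su /=; have := gapS u Su; rewrite distrC gtr0_norm ?subr_gt0 ?S_gt //; lra.
have [u /KS /= du] := closure_near Ke d0.
rewrite ltr_norml; lra.
Qed.

Lemma closure_conv_hull_ub S e : closed S -> closure (conv_hull S) e ->
  exists2 v, S v & e <= v.
Proof.
move=> Scl Ke; apply: contrapT => noUB.
have S_lt v : S v -> v < e by move=> Sv; rewrite ltNge; apply/negP => ev; apply: noUB; exists v.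
have [d d0 gapS] : exists2 d, 0 < d & forall v, S v -> d <= `|e - v|.
  by apply: closed_gap Scl _ => /S_lt; rewrite ltxx.
have KS : conv_hull S `<=` [set x | x <= e - d].
  apply: conv_hull_min; first exact: convexR_le.
  by move=> v Sv /=; have := gapS v Sv; rewrite gtr0_norm ?subr_gt0 ?S_lt //; lra.
have [v /KS /= dv] := closure_near Ke d0.
rewrite ltr_norml; lra.
Qed.

Lemma closed_conv_hull S : closed S -> closed (conv_hull S).
Proof.
move=> Scl; rewrite closure_id eqEsubset; split; first exact: subset_closure.
move=> e Ke; have [u Su ue] := closure_conv_hull_lb Scl Ke.
have [v Sv ev] := closure_conv_hull_ub Scl Ke.
have uev : u <= e <= v by rewrite ue ev.
exact: convexR_between (@conv_hull_convex S) (sub_conv_hull Su) (sub_conv_hull Sv) uev.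
Qed.

End ConvexHull.

Lemma is_interval_extremaE {R : realType} (I : set R) a b : is_interval I ->
  I a -> I b -> (forall y, I y -> a <= y <= b) -> I = `[a, b]%classic.
Proof.
move=> Iint Ia Ib Iab; rewrite eqEsubset; split=> y; first by rewrite /= in_itv; exact: Iab.
by rewrite /= in_itv; exact: Iint.
Qed.

Section ScaledInverse.
Context {R : realType}.
Variables (K : set R) (alpha h : R -> R) (c : R).
Hypotheses (K_convex : convexR K) (alpha_mono : {in K &, {mono alpha : x y / x <= y}})
  (c_gt0 : 0 < c) (h_in : forall x, 0 <= x <= 1 -> K (h x))
  (alpha_h : forall x, 0 <= x <= 1 -> alpha (h x) = x * c).

Let h_mem x : 0 <= x <= 1 -> h x \in K.
Proof. by move=> x01; apply/mem_set/h_in. Qed.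

Lemma scaled_inverse_mono : {in `[0, 1] &, {mono h : x y / x <= y}}.
Proof.
move=> x y; rewrite !in_itv /= => x01 y01.
by rewrite -alpha_mono ?h_mem // !alpha_h // ler_pM2r.
Qed.

Lemma scaled_inverse_continuous : {within `[0, 1], continuous h}.
Proof.
apply: segment_inc_surj_continuous; first exact: scaled_inverse_mono.
have unit0 : 0 <= (0 : R) <= 1 by rewrite lexx ler01.
have unit1 : 0 <= (1 : R) <= 1 by rewrite ler01 lexx.
move=> z; rewrite /= in_itv /= => h01z.
have Kz : z \in K by apply/mem_set/(convexR_between K_convex (h_in unit0) (h_in unit1)).
have alpha_z01 : 0 <= alpha z / c <= 1.
  case/andP: h01z.
  rewrite -(alpha_mono (h_mem unit0) Kz) -(alpha_mono Kz (h_mem unit1)).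
  rewrite !alpha_h // mul0r mul1r => az0 az1.
  by rewrite divr_ge0 ?(ltW c_gt0) //= ler_pdivrMr // mul1r.
exists (alpha z / c); first by rewrite /= in_itv.
apply: (inc_inj_in alpha_mono); rewrite ?h_mem //.
by rewrite alpha_h // divfK // gt_eqF.
Qed.

End ScaledInverse.

Section NprimeContraction.
Context {R : realType} {d : nat}.
Variables (T : 'rV[R]_d -> 'rV[R]_d) (V : 'rV[R]_d -> \bar R).

Lemma Nprime_le (lam : R) :
  (forall x, (V (T x) <= lam%:E * V x)%E) -> (Nprime T V <= lam%:E)%E.
Proof.
move=> V_decay; apply: ge_ereal_sup => _ [x [Vx_gt0 Vx_fin] <-].
move: Vx_gt0 Vx_fin (V_decay x); case: (V x) => [v| |] //= v_gt0 _ VTx.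
rewrite lte_fin in v_gt0.
apply: le_trans (lee_wpmul2r _ VTx) _; first by rewrite lee_fin invr_ge0 ltW.
by rewrite -!EFinM mulfK // gt_eqF.
Qed.

Variables (lam r : R).
Hypotheses (lam_ge0 : 0 <= lam) (V_decay : forall x, (V (T x) <= lam%:E * V x)%E)
  (r_ge0 : 0 <= r) (Nprime_le_r : (Nprime T V <= r%:E)%E).

(* N'_T(V) only controls the points where 0 < V < +oo; elsewhere the decay by
   lam keeps V nonpositive. *)
Lemma Nprime_step y c : 0 <= c -> (V y <= c%:E)%E -> (V (T y) <= (r * c)%:E)%E.
Proof.
move=> c_ge0 Vy_le; have [Vy_gt0|Vy_le0] := ltP 0%E (V y); last first.
  apply: le_trans (V_decay y) _; apply: le_trans (mule_ge0_le0 _ Vy_le0) _.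
    by rewrite lee_fin.
  by rewrite lee_fin mulr_ge0.
move: Vy_gt0 Vy_le; case Ev: (V y) => [v| |] //=.
rewrite lte_fin lee_fin => v_gt0 v_le.
have ratio_le : (V (T y) * (v^-1)%:E <= r%:E)%E.
  apply: le_trans Nprime_le_r; apply: ereal_sup_ubound.
  by exists y; rewrite /= ?Ev ?lte_fin ?ltry.
have := lee_wpmul2r (x := v%:E) _ ratio_le.
rewrite lee_fin (ltW v_gt0) -muleA -EFinM mulVf ?gt_eqF // mule1 => /(_ isT) VTy_le.
by apply: le_trans VTy_le _; rewrite -EFinM lee_fin ler_wpM2l.
Qed.

Lemma Nprime_iter k x c : 0 <= c -> (V x <= c%:E)%E ->
  (V (iter k T x) <= (r ^+ k * c)%:E)%E.
Proof.
move=> c_ge0 Vx_le; elim: k => [|k IHk] /=; first by rewrite expr0 mul1r.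
by rewrite exprS -mulrA; apply: Nprime_step; rewrite ?mulr_ge0 ?exprn_ge0.
Qed.

End NprimeContraction.

Section CompatibilityCertificate.
Context {R : realType} {d : nat}.
Variables (Xin : set 'rV[R]_d) (T : 'rV[R]_d -> 'rV[R]_d) (phi : 'rV[R]_d -> R).

Lemma orbit_in_Iphi k x : Xin x -> Iphi Xin T phi (phi (iter k T x)).
Proof.
move=> Xx; apply: subset_closure; apply: sub_conv_hull.
by exists k => //; exists x.
Qed.

Lemma nu_in_Iphi k : Xin !=set0 -> has_ubound (orbit_vals Xin T phi k) ->
  Iphi Xin T phi (nu Xin T phi k).
Proof.
move=> [x Xx] orbit_ub.
have orbit_ne : orbit_vals Xin T phi k !=set0 by exists (phi (iter k T x)); exists x.
apply: closureS (closure_sup orbit_ne orbit_ub) => _ [y Xy <-].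
by apply: sub_conv_hull; exists k => //; exists y.
Qed.

Variables (alpha : R -> R) (I : set R).
Hypothesis SCI : SC_with Xin T phi alpha I.

Lemma SC_alpha_mono :
  {in conv_hull (Iphi Xin T phi `|` I) &, {mono alpha : x y / x <= y}}.
Proof. by case: SCI => _ [_ [alpha_homo _]]; exact: le_mono_in. Qed.

Lemma nu_le_of_alpha_le k y : Xin !=set0 ->
  y \in conv_hull (Iphi Xin T phi `|` I) ->
  (forall x, Xin x -> alpha (phi (iter k T x)) <= alpha y) -> nu Xin T phi k <= y.
Proof.
move=> [x0 Xx0] y_hull alpha_le; apply: ge_sup => [|_ [x Xx <-]].
  by exists (phi (iter k T x0)); exists x0.
have orbit_hull : phi (iter k T x) \in conv_hull (Iphi Xin T phi `|` I).
  by apply: mem_set; apply: sub_conv_hull; left; exact: orbit_in_Iphi.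
by rewrite -SC_alpha_mono // alpha_le.
Qed.

Lemma SC_interval_closed : closed I.
Proof.
case: SCI => Iint [alphaI _].
have [a Ia alpha_a] : (alpha @` I) 0 by rewrite alphaI /= in_itv /= lexx ler01.
have [b Ib alpha_b] : (alpha @` I) 1 by rewrite alphaI /= in_itv /= ler01 lexx.
have I_hull y : I y -> y \in conv_hull (Iphi Xin T phi `|` I).
  by move=> Iy; apply/mem_set; apply: sub_conv_hull; right.
suff -> : I = `[a, b]%classic by exact: itv_closed.
apply: is_interval_extremaE => // y Iy.
have : (alpha @` I) (alpha y) by exists y.
rewrite alphaI /= in_itv /= -{1}alpha_a -alpha_b.
by rewrite !SC_alpha_mono ?I_hull.
Qed.

Lemma SC_hull_closed : closed (conv_hull (Iphi Xin T phi `|` I)).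
Proof. by apply: closed_conv_hull; apply: closedU SC_interval_closed; apply: closed_closure. Qed.

End CompatibilityCertificate.

Theorem mainTheorem18 (R : realType) (d : nat)
  (Xin : set 'rV[R]_d) (T : 'rV[R]_d -> 'rV[R]_d) (phi : 'rV[R]_d -> R)
  (V : 'rV[R]_d -> \bar R) (alpha : R -> R) (I : set R) (h : R -> R) :
  Xin !=set0 ->
  phi 0 = 0 ->
  (forall k, has_ubound (orbit_vals Xin T phi k)) ->
  opt_lyapunov Xin T V ->
  compatible Xin T phi V ->
  (0 < Nprime T V)%E ->
  certificate Xin T phi alpha V ->
  SC_with Xin T phi alpha I ->
  (forall x, 0 <= x <= 1 ->
     cl_conv_hull (Iphi Xin T phi `|` I) (h x) /\
     alpha (h x) = x * fine (Vsup Xin V)) ->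
  ({in `[0, 1] &, {homo h : x y / x < y}} /\
   {within `[0, 1], continuous h}) /\
  (exists r : R, Nprime T V = r%:E /\ 0 < r < 1 /\
     forall k : nat, nu Xin T phi k <= h (r ^+ k)) /\
  (exists k : nat, h 0 < nu Xin T phi k).
Proof.
move=> Xin_ne _ orbit_ub [Vsup_gt0 [Vsup_le1 [lam [/andP[lam_gt0 lam_lt1] V_decay]]]] _
  Nprime_gt0 [_ [[k0 _ alpha_nu_k0] alpha_le_V]] SCI h_spec.
set K := conv_hull (Iphi Xin T phi `|` I).
have K_convex : convexR K by apply: conv_hull_convex.
have alpha_mono := SC_alpha_mono SCI.
have h_in x : 0 <= x <= 1 -> K (h x).
  by move=> x01; rewrite ((closure_id K).1 (SC_hull_closed SCI)); exact: (h_spec x x01).1.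
have [vb Vsup_E /andP[vb_gt0 _]] : exists2 vb, Vsup Xin V = vb%:E & 0 < vb <= 1.
  move: Vsup_gt0 Vsup_le1; case: (Vsup Xin V) => // vb.
  by rewrite lte_fin lee_fin => vb_gt0 vb_le1; exists vb; rewrite ?vb_gt0.
have alpha_h x : 0 <= x <= 1 -> alpha (h x) = x * vb.
  by move=> x01; rewrite (h_spec x x01).2 Vsup_E.
have h_mono := scaled_inverse_mono alpha_mono vb_gt0 h_in alpha_h.
have [r Nprime_E /andP[r_gt0 r_le_lam]] : exists2 r, Nprime T V = r%:E & 0 < r <= lam.
  move: Nprime_gt0 (Nprime_le V_decay); case: (Nprime T V) => // r.
  by rewrite lte_fin lee_fin => r_gt0 r_le_lam; exists r; rewrite ?r_gt0.
split; [split|split].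
- by move=> x y x01 y01; rewrite (leW_mono_in h_mono).
- exact: scaled_inverse_continuous K_convex alpha_mono vb_gt0 h_in alpha_h.
- exists r; split => //; split; first by rewrite r_gt0 (le_lt_trans r_le_lam).
  move=> k; have rk01 : 0 <= r ^+ k <= 1.
    by rewrite exprn_ge0 ?exprn_ile1 ?ltW // (le_lt_trans r_le_lam).
  apply: (nu_le_of_alpha_le SCI Xin_ne (mem_set (h_in _ rk01))) => x Xx.
  rewrite alpha_h // -lee_fin; apply: le_trans (alpha_le_V k x Xx) _.
  apply: (Nprime_iter (ltW lam_gt0) V_decay (ltW r_gt0)); rewrite ?Nprime_E ?(ltW vb_gt0) //.
  by rewrite -Vsup_E; apply: ereal_sup_ubound; exists x.
- exists k0; have h0_K : h 0 \in K by apply: mem_set; apply: h_in; rewrite lexx ler01.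
  have nu_K : nu Xin T phi k0 \in K.
    by apply: mem_set; apply: sub_conv_hull; left; exact: nu_in_Iphi.
  by rewrite -(leW_mono_in alpha_mono h0_K nu_K) alpha_h ?mul0r // lexx ler01.
Qed.
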